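(* Let $E_1 := \{x\in\mathbb{R}^4 : x_1^2+x_2^2+x_3^2 \le x_4^2,\ x_4\ge0\}$, $E_2 := \{\lambda(-1,-1,0,-1) : \lambda\ge0\}$, $E_3 := \{\lambda(-1,1,0,-1):\lambda\ge0\}$ and $E := E_1\cup E_2\cup E_3$. Then $E$ is closed, $\lambda E\subseteq E$ for all $\lambda\ge0$, $E\cap(-E)=\{0\}$, and $\operatorname{conv}(E) = E_1+E_2+E_3$ is not closed; specifically $(0,0,1,0)$ lies in the closure of $\operatorname{conv}(E)$ but not in $\operatorname{conv}(E)$.
   Context: $\operatorname{conv}(E)$ denotes the convex hull of $E$. *)

From HB Require Import structures.
From mathcomp Require Import all_boot all_order all_algebra.
From mathcomp Require Import all_classical all_reals all_analysis.
Set Implicit Arguments. Unset Strict Implicit. Unset Printing Implicit Defensive.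
Import Order.TTheory GRing.Theory Num.Theory.
Import numFieldNormedType.Exports.
Local Open Scope classical_set_scope.
Local Open Scope ring_scope.

(* Points of R^4 are row vectors 'rV[R]_4; coordinates x_1..x_4 are
   x ord0 (crd 0) .. x ord0 (crd 3). *)
Definition crd (k : nat) : 'I_4 := inord k.

Definition vec4 (R : realType) (a b c d : R) : 'rV[R]_4 :=
  \row_(i < 4) nth 0 [:: a; b; c; d] i.

Definition conv_hull (R : realType) (n : nat) (A : set 'rV[R]_n) : set 'rV[R]_n :=
  [set x | exists (m : nat) (w : 'I_m -> R) (v : 'I_m -> 'rV[R]_n),
      (forall i, 0 <= w i) /\ \sum_(i < m) w i = 1 /\
      (forall i, A (v i)) /\ x = \sum_(i < m) w i *: v i].

Definition minkowski_sum (R : realType) (n : nat) (A B : set 'rV[R]_n) : set 'rV[R]_n :=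
  [set a + b | a in A & b in B].

Definition E1 (R : realType) : set 'rV[R]_4 :=
  [set x | (x ord0 (crd 0)) ^+ 2 + (x ord0 (crd 1)) ^+ 2 + (x ord0 (crd 2)) ^+ 2
             <= (x ord0 (crd 3)) ^+ 2 /\ 0 <= x ord0 (crd 3)].
Definition E2 (R : realType) : set 'rV[R]_4 :=
  [set x | exists2 l : R, 0 <= l & x = l *: vec4 (-1) (-1) 0 (-1)].
Definition E3 (R : realType) : set 'rV[R]_4 :=
  [set x | exists2 l : R, 0 <= l & x = l *: vec4 (-1) 1 0 (-1)].
Arguments E1 R : clear implicits.
Arguments E2 R : clear implicits.
Arguments E3 R : clear implicits.
Definition E (R : realType) : set 'rV[R]_4 := E1 R `|` E2 R `|` E3 R.
Arguments E R : clear implicits.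

From HB Require Import structures.
From mathcomp Require Import all_boot all_order all_algebra.
From mathcomp Require Import all_classical all_reals all_analysis.
From mathcomp Require Import ring lra.
Import Order.TTheory GRing.Theory Num.Theory.
Import numFieldNormedType.Exports.
Local Open Scope classical_set_scope.
Local Open Scope ring_scope.

(* E1 is the Lorentz cone, a closed convex cone (closure under addition is
   Cauchy-Schwarz), and E2, E3 are closed rays; hence conv(E) = E1 + E2 + E3, E is
   closed and stable under nonnegative scaling, and E is pointed because E1 lies
   in x4 >= 0, the rays in x4 <= 0, and E1 meets the negated rays only at 0.
   With t = 1/(2e), (0,0,1,e) = (t,0,1,t+e) + t/2 (-1,-1,0,-1) + t/2 (-1,1,0,-1)
   lies in E1 + E2 + E3 and tends to (0,0,1,0); but the ray summands have equal
   first and last coordinates, so a decomposition of (0,0,1,0) would need a point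
   of E1 with x1 = x4 and x3 = 1, which violates x1^2 + x2^2 + x3^2 <= x4^2. *)

Set Implicit Arguments.
Unset Strict Implicit.
Unset Printing Implicit Defensive.

Section ClosedRealPredicates.
Variables (R : realType) (T : topologicalType).
Implicit Types f g : T -> R.

Lemma closed_fun_le f g : continuous f -> continuous g ->
  closed [set x | f x <= g x].
Proof.
move=> cf cg; rewrite (_ : [set x | _] = (g - f) @^-1` [set y | 0 <= y]).
  by apply: preimage_closed; [move=> x _; exact: (continuousB (cg x) (cf x))|exact: closed_ge].
by apply/seteqP; split => x /=; rewrite subr_ge0.
Qed.

Lemma closed_fun_eq f g : continuous f -> continuous g ->
  closed [set x | f x = g x].
Proof.
move=> cf cg; rewrite (_ : [set x | _] = [set x | f x <= g x] `&` [set x | g x <= f x]).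
  by apply: closedI; exact: closed_fun_le.
by apply/seteqP; split => x /=; [move->|move=> [? ?]; apply/eqP; rewrite eq_le; apply/andP].
Qed.

End ClosedRealPredicates.

Section Cones.
Variables (R : realType) (n : nat).
Implicit Types (A B C : set 'rV[R]_n) (v x y : 'rV[R]_n).

Definition ray v : set 'rV[R]_n := [set x | exists2 l : R, 0 <= l & x = l *: v].

Definition convex_cone A :=
  [/\ A 0, forall l x, 0 <= l -> A x -> A (l *: x) &
      forall x y, A x -> A y -> A (x + y)].

Lemma convex_cone_ray v : convex_cone (ray v).
Proof.
split; first by exists 0; rewrite ?scale0r.
  by move=> l _ l0 [m m0 ->]; exists (l * m); [exact: mulr_ge0|rewrite scalerA].
by move=> _ _ [l l0 ->] [m m0 ->]; exists (l + m); [exact: addr_ge0|rewrite scalerDl].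
Qed.

Lemma closed_ray v k : v ord0 k != 0 -> closed (ray v).
Proof.
move=> vk0; set t := fun x : 'rV[R]_n => x ord0 k / v ord0 k.
have ct : continuous t.
  move=> x; apply: (@continuousM _ _ (fun x : 'rV[R]_n => x ord0 k) (fun=> _)).
    exact: coord_continuous.
  exact: cst_continuous.
rewrite (_ : ray v = \bigcap_(j in [set: 'I_n]) [set x : 'rV[R]_n | x ord0 j = t x * v ord0 j]
                      `&` [set x | 0 <= t x]).
  apply: closedI; last by apply: closed_fun_le => //; exact: cst_continuous.
  apply: closed_bigI => j _; apply: closed_fun_eq; first exact: coord_continuous.
  by move=> x; apply: (@continuousM _ _ t (fun=> _)); [exact: ct|exact: cst_continuous].
apply/seteqP; split => x /=.
  have tZ l : t (l *: v) = l by rewrite /t mxE mulfK.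
  by case=> l l0 ->; rewrite tZ; split=> // j _; rewrite /= tZ mxE.
by case=> hx t0; exists (t x) => //; apply/rowP => j; rewrite mxE; exact: hx.
Qed.

Lemma minkowski_sum_cone A B :
  convex_cone A -> convex_cone B -> convex_cone (minkowski_sum A B).
Proof.
move=> [A0 AZ AD] [B0 BZ BD]; split; first by exists 0 => //; exists 0; rewrite ?addr0.
  by move=> l _ l0 [a Aa [b Bb <-]]; exists (l *: a); [exact: AZ|exists (l *: b); [exact: BZ|rewrite scalerDr]].
move=> _ _ [a Aa [b Bb <-]] [a' Aa' [b' Bb' <-]].
by exists (a + a'); [exact: AD|exists (b + b'); [exact: BD|rewrite addrACA]].
Qed.

Lemma conv_hull_sub_cone A C : convex_cone C -> A `<=` C -> conv_hull A `<=` C.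
Proof.
move=> [C0 CZ CD] AC x [m [w [v [w0 [_ [Av ->]]]]]].
elim: m w v w0 Av => [|m IH] w v w0 Av; first by rewrite big_ord0.
rewrite big_ord_recr /=; apply: CD; last by apply: CZ => //; exact: AC.
by apply: IH => i; [exact: w0|exact: Av].
Qed.

Lemma conv_hull_setU3_cone A B C :
  convex_cone A -> convex_cone B -> convex_cone C ->
  conv_hull (A `|` B `|` C) = minkowski_sum (minkowski_sum A B) C.
Proof.
move=> cA cB cC; have cABC := minkowski_sum_cone (minkowski_sum_cone cA cB) cC.
case: cA cB cC => [A0 AZ _] [B0 BZ _] [C0 CZ _].
apply/seteqP; split.
  apply: conv_hull_sub_cone => // x [[Ax|Bx]|Cx].
  - by exists x; [exists x => //; exists 0; rewrite ?addr0|exists 0; rewrite ?addr0].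
  - by exists x; [exists 0 => //; exists x; rewrite ?add0r|exists 0; rewrite ?addr0].
  - by exists 0; [exists 0 => //; exists 0; rewrite ?addr0|exists x; rewrite ?add0r].
move=> _ [_ [a Aa [b Bb <-]] [c Cc <-]].
(* [a + b + c] is the barycenter of [3 a], [3 b] and [3 c]. *)
exists 3, (fun=> 3^-1), (fun i => 3 *: nth 0 [:: a; b; c] i); split.
  by move=> i; rewrite invr_ge0.
split; first by rewrite !big_ord_recr big_ord0 /=; field.
split; first by case=> -[|[|[|]]] //= _; [left; left; exact: AZ|left; right; exact: BZ|right; exact: CZ].
by rewrite !big_ord_recr big_ord0 /= !scalerA mulVf ?scale1r ?add0r.
Qed.

End Cones.

Section LorentzConeAndRays.
Variable R : realType.
Implicit Types x y : 'rV[R]_4.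
Local Notation "x `_[ k ]" := (x ord0 (crd k)) (at level 3, format "x `_[ k ]").

Lemma row4P x y : x`_[0] = y`_[0] -> x`_[1] = y`_[1] -> x`_[2] = y`_[2] ->
  x`_[3] = y`_[3] -> x = y.
Proof.
move=> e0 e1 e2 e3; apply/rowP => j; rewrite (_ : j = crd j); last first.
  by apply: val_inj; rewrite /= inordK.
by case: j => -[|[|[|[|//]]]].
Qed.

Lemma lorentz_dot_le (F : realFieldType) (a0 a1 a2 a3 b0 b1 b2 b3 : F) :
  a0 ^+ 2 + a1 ^+ 2 + a2 ^+ 2 <= a3 ^+ 2 -> 0 <= a3 ->
  b0 ^+ 2 + b1 ^+ 2 + b2 ^+ 2 <= b3 ^+ 2 -> 0 <= b3 ->
  a0 * b0 + a1 * b1 + a2 * b2 <= a3 * b3.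
Proof.
move=> ha a30 hb b30.
have lagrange : (a0 * b0 + a1 * b1 + a2 * b2) ^+ 2 + (a0 * b1 - a1 * b0) ^+ 2
    + (a0 * b2 - a2 * b0) ^+ 2 + (a1 * b2 - a2 * b1) ^+ 2
    = (a0 ^+ 2 + a1 ^+ 2 + a2 ^+ 2) * (b0 ^+ 2 + b1 ^+ 2 + b2 ^+ 2) by ring.
have cs : (a0 * b0 + a1 * b1 + a2 * b2) ^+ 2 <= (a3 * b3) ^+ 2.
  rewrite exprMn; apply: le_trans (ler_pM _ _ ha hb); rewrite ?addr_ge0 ?sqr_ge0 //.
  by rewrite -lagrange -!addrA lerDl !addr_ge0 ?sqr_ge0.
have := mulr_ge0 a30 b30; nra.
Qed.

Lemma convex_cone_E1 : convex_cone (E1 R).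
Proof.
split; first by rewrite /E1 /= !mxE expr0n /=; lra.
  move=> l x l0 [hx x3]; rewrite /E1 /= !mxE !exprMn -!mulrDr.
  by split; [apply: ler_wpM2l; rewrite ?sqr_ge0|exact: mulr_ge0].
move=> x y [hx x3] [hy y3]; rewrite /E1 /= !mxE.
have := lorentz_dot_le hx x3 hy y3; split; [nra|lra].
Qed.

Lemma convex_cone_E2 : convex_cone (E2 R). Proof. exact: convex_cone_ray. Qed.
Lemma convex_cone_E3 : convex_cone (E3 R). Proof. exact: convex_cone_ray. Qed.

Lemma E_scale l x : 0 <= l -> E R x -> E R (l *: x).
Proof.
have [_ Z1 _] := convex_cone_E1; have [_ Z2 _] := convex_cone_E2.
have [_ Z3 _] := convex_cone_E3.
move=> l0 [[Ex|Ex]|Ex]; [left; left; exact: Z1|left; right; exact: Z2|right; exact: Z3].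
Qed.

Lemma closed_E1 : closed (E1 R).
Proof.
have crd_cont k : continuous (fun x : 'rV[R]_4 => x`_[k]) by exact: coord_continuous.
have sqr_cont k : continuous (fun x : 'rV[R]_4 => x`_[k] ^+ 2).
  by move=> x; exact: (continuousM (crd_cont k x) (crd_cont k x)).
apply: closedI; apply: closed_fun_le.
- by move=> x; exact: (continuousD (continuousD (sqr_cont 0 x) (sqr_cont 1 x)) (sqr_cont 2 x)).
- exact: sqr_cont.
- exact: cst_continuous.
- exact: crd_cont.
Qed.

Lemma closed_E2 : closed (E2 R).
Proof. by apply: (closed_ray (k := crd 3)); rewrite mxE inordK //= oppr_eq0 oner_eq0. Qed.

Lemma closed_E3 : closed (E3 R).
Proof. by apply: (closed_ray (k := crd 3)); rewrite mxE inordK //= oppr_eq0 oner_eq0. Qed.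

Lemma E2_crd x : E2 R x ->
  [/\ x`_[0] = x`_[3], x`_[1] = x`_[3], x`_[2] = 0 & x`_[3] <= 0].
Proof. by case=> l l0 ->; rewrite !mxE !inordK //=; split; lra. Qed.

Lemma E3_crd x : E3 R x ->
  [/\ x`_[0] = x`_[3], x`_[1] = - x`_[3], x`_[2] = 0 & x`_[3] <= 0].
Proof. by case=> l l0 ->; rewrite !mxE !inordK //=; split; lra. Qed.

Lemma E_crd3_eq0 x : E R x -> x`_[3] = 0 -> x = 0.
Proof.
move=> Ex x3; suff [x0 x1 x2] : [/\ x`_[0] = 0, x`_[1] = 0 & x`_[2] = 0].
  by apply: row4P; rewrite mxE.
case: Ex => [[[hx _]|/E2_crd[-> -> -> _]]|/E3_crd[-> -> -> _]]; rewrite ?x3 ?oppr0 //.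
have := sqr_ge0 (x`_[0]); have := sqr_ge0 (x`_[1]); have := sqr_ge0 (x`_[2]).
rewrite x3 expr0n /= in hx; split; nra.
Qed.

Lemma E1_opp_ray_crd3 x : E1 R x -> E2 R (- x) \/ E3 R (- x) -> x`_[3] = 0.
Proof.
case=> hx x3 [/E2_crd[]|/E3_crd[]]; rewrite !mxE => /oppr_inj x0 /oppr_inj x1 /eqP;
  rewrite oppr_eq0 => /eqP x2 _; rewrite x0 x1 x2 in hx; nra.
Qed.

Lemma ray_crd3_le0 x : E2 R x \/ E3 R x -> x`_[3] <= 0.
Proof. by case=> [/E2_crd[]|/E3_crd[]]. Qed.

Lemma E_opp_crd3 x : E R x -> E R (- x) -> x`_[3] = 0.
Proof.
have opp3 y : (- y)`_[3] = - y`_[3] by rewrite mxE.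
have E_split y : E R y -> E1 R y \/ (E2 R y \/ E3 R y) by case=> [[]|]; tauto.
move=> /E_split[E1x|rayx] /E_split[E1x'|rayx'].
- by case: E1x E1x' => _ x3 [_]; rewrite opp3; lra.
- exact: E1_opp_ray_crd3.
- by apply/eqP; rewrite -oppr_eq0 -opp3; apply/eqP/E1_opp_ray_crd3; rewrite ?opprK.
- by move: (ray_crd3_le0 rayx) (ray_crd3_le0 rayx'); rewrite opp3; lra.
Qed.

Lemma E_setI_opp : E R `&` [set - x | x in E R] = [set 0].
Proof.
apply/seteqP; split=> [x [Ex [y Ey yx]] /=|_ -> /=].
  by apply: (E_crd3_eq0 Ex (E_opp_crd3 Ex _)); rewrite -yx opprK.
have E0 : E R 0 by left; right; case: convex_cone_E2.
by split=> //; exists 0; rewrite ?oppr0.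
Qed.

Local Notation M := (minkowski_sum (minkowski_sum (E1 R) (E2 R)) (E3 R)).

Lemma vec4_0010_notin_sum : ~ M (vec4 0 0 1 0).
Proof.
move=> [_ [a [ha _] [b /E2_crd[b0 _ b2 _] <-]] [c /E3_crd[c0 _ c2 _] abc]].
have e k : (vec4 0 0 1 0 : 'rV[R]_4)`_[k] = a`_[k] + b`_[k] + c`_[k] by rewrite -abc !mxE.
move: (e 0) (e 2) (e 3); rewrite !mxE !inordK //= b0 b2 c0 c2 => e0 e2 e3.
have := sqr_ge0 (a`_[1]); nra.
Qed.

Lemma vec4_001e_in_sum (e : R) : 0 < e -> M (vec4 0 0 1 e).
Proof.
move=> e0; set t := (2 * e)^-1.
have te : t * (2 * e) = 1 by rewrite mulVf // mulf_neq0 // gt_eqF.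
have t0 : 0 < t by rewrite invr_gt0 mulr_gt0.
exists (vec4 t 0 1 (t + e) + (t / 2) *: vec4 (-1) (-1) 0 (-1)).
  exists (vec4 t 0 1 (t + e)); last by exists ((t / 2) *: vec4 (-1) (-1) 0 (-1)) => //; exists (t / 2) => //; lra.
  by rewrite /E1 /= !mxE !inordK //=; split; nra.
exists ((t / 2) *: vec4 (-1) 1 0 (-1)); first by exists (t / 2) => //; lra.
by apply: row4P; rewrite !mxE !inordK //=; lra.
Qed.

Lemma vec4_0010_in_closure_sum : closure M (vec4 0 0 1 0).
Proof.
move=> B /nbhs_ballP[e e0 eB]; have e20 : 0 < e / 2 by rewrite divr_gt0.
exists (vec4 0 0 1 (e / 2)); split; first exact: vec4_001e_in_sum.
apply: eB; split=> // i j; rewrite !mxE.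
case: j => [[|[|[|[|k]]]] Hk] //; rewrite /ball /= ?subrr ?normr0 //.
by rewrite sub0r normrN gtr0_norm //; lra.
Qed.

End LorentzConeAndRays.

Theorem mainTheorem11 (R : realType) :
  closed (E R) /\
  (forall l : R, 0 <= l -> forall x, E R x -> E R (l *: x)) /\
  E R `&` [set - x | x in E R] = [set 0] /\
  conv_hull (E R) = minkowski_sum (minkowski_sum (E1 R) (E2 R)) (E3 R) /\
  ~ closed (conv_hull (E R)) /\
  closure (conv_hull (E R)) (vec4 0 0 1 0) /\
  ~ conv_hull (E R) (vec4 0 0 1 0).
Proof.
have hullE : conv_hull (E R) = minkowski_sum (minkowski_sum (E1 R) (E2 R)) (E3 R).
  exact: conv_hull_setU3_cone (convex_cone_E1 R) (convex_cone_E2 R) (convex_cone_E3 R).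
rewrite hullE; split.
  by apply: closedU; [apply: closedU|]; [exact: closed_E1|exact: closed_E2|exact: closed_E3].
split; first by move=> l l0 x; exact: E_scale.
split; first exact: E_setI_opp.
split=> //; split.
  move=> /closure_id closedM; apply: (@vec4_0010_notin_sum R).
  by rewrite closedM; exact: vec4_0010_in_closure_sum.
split; [exact: vec4_0010_in_closure_sum|exact: vec4_0010_notin_sum].
Qed.
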